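(* For every integer partition $\lambda$ there exists a unique elementary interval bipartition $(\mathbf L,\mathbf R)$ such that $\lambda=\boldsymbol\lambda(\mathbf L,\mathbf R)$.
   Context: A bipartition of a set $\mathbf A$ is an ordered pair $(\mathbf L,\mathbf R)$ with $\mathbf L\cup\mathbf R=\mathbf A$, $\mathbf L\cap\mathbf R=\varnothing$. An interval bipartition is a bipartition of an interval $\{i,\dots,j\}$ of $\mathbb{N}^*$ (or of $\varnothing$); it is elementary if either $\mathbf L=\mathbf R=\varnothing$, or $1\in\mathbf L$ and $\max(\mathbf L\cup\mathbf R)\in\mathbf R$. For $\mathbf L=\{\ell_1<\dots<\ell_p\}$ nonempty, $\boldsymbol\lambda(\mathbf L,\mathbf R)$ is the integer partition with $\boldsymbol\lambda(\mathbf L,\mathbf R)_i=\#\{r\in\mathbf R:\ell_i<r\}$ (zero parts discarded); if $\mathbf L=\varnothing$, $\boldsymbol\lambda(\mathbf L,\mathbf R)=(0)$. The empty partition is $(0)$. *)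

From mathcomp Require Import all_boot.
From mathcomp Require Import finmap.
Set Implicit Arguments. Unset Strict Implicit. Unset Printing Implicit Defensive.
Local Open Scope fset_scope.

(* An integer partition: a weakly decreasing finite sequence of positive
   integers. The empty partition "(0)" is represented by [::]. *)
Definition is_partition (la : seq nat) : bool :=
  sorted geq la && all (fun x => 0 < x) la.

Definition is_interval (A : {fset nat}) : Prop :=
  A = fset0 \/ exists i j, 1 <= i /\ i <= j /\ A = [fset k | k in iota i (j - i).+1].

Definition interval_bipartition (L R : {fset nat}) : Prop :=
  L `&` R = fset0 /\ is_interval (L `|` R).

Definition elementary (L R : {fset nat}) : Prop :=
  interval_bipartition L R /\
  ((L = fset0 /\ R = fset0) \/
   (1 \in L /\ (\max_(x <- enum_fset (L `|` R)) x) \in R)).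

Definition lambdaLR (L R : {fset nat}) : seq nat :=
  filter (fun x => 0 < x)
    (map (fun l => count (fun r => l < r) (enum_fset R)) (sort leq (enum_fset L))).

(* A nonempty elementary bipartition is a bipartition of {1, ..., n} with
   1 in L and n in R.  If L = {l_1 < ... < l_p}, the n - l_i numbers above l_i
   are the p - i elements of L above it and the lambda_i elements of R above
   it, so lambda_i + (p - i) = n - l_i, and lambda_i > 0 since n is in R.  As
   l_1 = 1, this forces n = lambda_1 + p and l_i = lambda_1 + i - lambda_i, so
   (L, R) is determined by lambda.  Conversely, for any partition lambda these
   formulas give a strictly increasing sequence in {1, ..., n - 1} starting
   at 1, hence an elementary bipartition, and the same count shows that its
   partition is lambda. *)

From mathcomp Require Import all_boot.
From mathcomp Require Import finmap.
From mathcomp Require Import zify.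
Local Open Scope fset_scope.
(* fset_scope reinterprets [+] on finite maps. *)
Local Open Scope nat_scope.

Definition fiota (n : nat) : {fset nat} := [fset k | k in iota 1 n].

Lemma in_fiota n x : (x \in fiota n) = (0 < x <= n).
Proof. by rewrite in_fset mem_iota add1n ltnS. Qed.

Lemma bigmax_fiota n : \max_(x <- enum_fset (fiota n)) x = n.
Proof.
have fiota_iota : perm_eq (enum_fset (fiota n)) (iota 1 n).
  by apply: uniq_perm; rewrite ?fset_uniq ?iota_uniq // => x; rewrite in_fset.
rewrite (perm_big _ fiota_iota); elim: n {fiota_iota} => [|n IHn]; first by rewrite big_nil.
by rewrite -(addn1 n) iotaD big_cat IHn big_seq1 add1n addn1; apply/maxn_idPr.
Qed.

Lemma count_gt_iota l n : count (fun x => l < x) (iota 1 n) = n - l.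
Proof.
elim: n => [|n IHn]; first by rewrite sub0n.
by rewrite -(addn1 n) iotaD count_cat IHn /= add1n; case: ltnP; lia.
Qed.

Lemma count_gt_nth_sorted {s : seq nat} {i : nat} : sorted ltn s -> i < size s ->
  count (fun x => nth 0 s i < x) s = size s - i.+1.
Proof.
elim: s i => [//|a t IHt] i /= a_t.
have a_lt : all (ltn a) t := order_path_min ltn_trans a_t.
have t_sorted : sorted ltn t := path_sorted a_t.
case: i => [|i] i_lt /=.
  rewrite ltnn subn1 /= -(count_predT t); apply: eq_in_count => x x_t.
  exact: (allP a_lt).
have a_lt_nth : a < nth 0 t i by apply: (allP a_lt); apply: mem_nth.
by rewrite IHt // ltnNge (ltnW a_lt_nth).
Qed.

Lemma sort_enum_fset (s : seq nat) :
  sorted ltn s -> sort leq (enum_fset [fset x | x in s]) = s.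
Proof.
move=> s_lt; have s_le : sorted leq s by apply: sub_sorted s_lt => x y /ltnW.
apply: (sorted_eq leq_trans anti_leq) => //; first exact/sort_sorted/leq_total.
rewrite perm_sort; apply: uniq_perm; rewrite ?fset_uniq ?(sorted_uniq ltn_trans ltnn) //.
by move=> x; rewrite in_fset.
Qed.

Lemma fset_sort_enum (A : {fset nat}) : [fset x | x in sort leq (enum_fset A)] = A.
Proof. by apply/fsetP => x; rewrite in_fset mem_sort. Qed.

Lemma elementary_fiotaP {L R : {fset nat}} : 1 \in L ->
  elementary L R <-> exists n, [/\ L `|` R = fiota n, L `&` R = fset0 & n \in R].
Proof.
move=> one_L; split.
  case=> [[LR0 LR_interval] [[L0 _]|[_ max_R]]]; first by rewrite L0 in_fset0 in one_L.
  have one_LR : 1 \in L `|` R by rewrite in_fsetU one_L.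
  case: LR_interval => [LR_0|[i [j [i_gt0 [i_le_j LR_eq]]]]].
    by rewrite LR_0 in_fset0 in one_LR.
  have LR_fiota : L `|` R = fiota j.
    move: one_LR; rewrite LR_eq in_fset mem_iota => one_ij.
    have [-> ->] : i = 1 /\ (j - i).+1 = j by lia.
    by [].
  by exists j; split; rewrite // -(bigmax_fiota j) -LR_fiota.
case=> n [LR_fiota LR0 n_R].
have : n \in fiota n by rewrite -LR_fiota in_fsetU n_R orbT.
rewrite in_fiota => /andP[n_gt0 _].
split; last by right; rewrite LR_fiota bigmax_fiota.
split=> //; right; exists 1, n; do !split => //.
by rewrite LR_fiota; have -> : (n - 1).+1 = n by lia.
Qed.

Definition semiperimeter (la : seq nat) : nat := head 0 la + size la.

Definition left_seq (la : seq nat) : seq nat :=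
  mkseq (fun i => head 0 la + i.+1 - nth 0 la i) (size la).

Definition left_set (la : seq nat) : {fset nat} := [fset x | x in left_seq la].

Definition right_set (la : seq nat) : {fset nat} :=
  fiota (semiperimeter la) `\` left_set la.

Lemma left_set_nil : left_set [::] = fset0.
Proof. by apply/fsetP => x; rewrite in_fset. Qed.

Lemma right_set_nil : right_set [::] = fset0.
Proof. by apply/fsetP => x; rewrite in_fsetD in_fiota; case: x. Qed.

Lemma one_in_left_set {la : seq nat} : la != [::] -> 1 \in left_set la.
Proof.
rewrite -size_eq0 -lt0n => la_gt0; rewrite in_fset; apply/(nthP 0); exists 0.
  by rewrite size_mkseq.
by rewrite nth_mkseq // -nth0 addn1 subSnn.
Qed.

Lemma lambdaLR0 (R : {fset nat}) : lambdaLR fset0 R = [::].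
Proof. by []. Qed.

Section BipartitionOfFiota.
Context {n : nat} {L R : {fset nat}}.
Hypotheses (LR_fiota : L `|` R = fiota n) (LR0 : L `&` R = fset0) (n_R : n \in R).

Local Notation s := (sort leq (enum_fset L)).

Lemma notin_R_of_L x : x \in L -> x \notin R.
Proof.
move=> x_L; have : x \notin L `&` R by rewrite LR0 in_fset0.
by rewrite in_fsetI x_L.
Qed.

Lemma R_fiotaD : R = fiota n `\` L.
Proof.
apply/fsetP => x; rewrite -LR_fiota in_fsetD in_fsetU.
by case: (boolP (x \in L)) => [/notin_R_of_L/negbTE|].
Qed.

Lemma count_gt_LR l :
  count (fun x => l < x) (enum_fset L) + count (fun x => l < x) (enum_fset R) = n - l.
Proof.
rewrite -count_cat -(count_gt_iota l n); apply/permP/uniq_perm; rewrite ?iota_uniq //.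
  rewrite cat_uniq !fset_uniq andbT /=; apply/hasPn => x x_R.
  by apply: contraL x_R; apply: notin_R_of_L.
by move=> x; rewrite mem_cat -in_fsetU LR_fiota in_fset.
Qed.

Lemma lambdaLR_sort :
  lambdaLR L R = [seq count (fun r => l < r) (enum_fset R) | l <- s].
Proof.
rewrite /lambdaLR; apply/all_filterP; rewrite all_map; apply/allP => l.
rewrite mem_sort => l_L /=; rewrite -has_count; apply/hasP; exists n => //.
have : l \in fiota n by rewrite -LR_fiota in_fsetU l_L.
rewrite in_fiota => /andP[_ l_le_n]; rewrite ltn_neqAle l_le_n andbT.
by apply: contraTneq n_R => <-; apply: notin_R_of_L.
Qed.

Lemma lambdaLR_nth : size (lambdaLR L R) = size s /\
  forall i, i < size s -> nth 0 (lambdaLR L R) i + (size s - i.+1) = n - nth 0 s i.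
Proof.
rewrite lambdaLR_sort size_map; split=> // i i_lt.
have s_sorted : sorted ltn s.
  by rewrite ltn_sorted_uniq_leq sort_uniq fset_uniq sort_sorted //; apply: leq_total.
rewrite (nth_map 0) // -(count_gt_nth_sorted s_sorted i_lt).
by rewrite (permP (permEl (perm_sort leq _))) addnC count_gt_LR.
Qed.

Hypothesis one_L : 1 \in L.

Lemma left_right_set_lambdaLR_fiota :
  (left_set (lambdaLR L R), right_set (lambdaLR L R)) = (L, R).
Proof.
have [size_la nth_la] := lambdaLR_nth; set la := lambdaLR L R in size_la nth_la *.
have one_s : 1 \in s by rewrite mem_sort.
have s_gt0 : 0 < size s by rewrite lt0n size_eq0; apply: contraTneq one_s => ->.
have s_bound i : i < size s -> 0 < nth 0 s i <= n.
  by move=> i_lt; rewrite -in_fiota -LR_fiota in_fsetU -(mem_sort leq) mem_nth.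
have s0 : nth 0 s 0 = 1.
  have [j j_lt s_j] := nthP 0 one_s.
  have s_le : sorted leq s by rewrite sort_sorted //; apply: leq_total.
  have := sorted_leq_nth leq_trans leqnn 0 s_le 0 j s_gt0 j_lt (leq0n j).
  by rewrite s_j; have := s_bound 0 s_gt0; lia.
have n_eq : semiperimeter la = n.
  rewrite /semiperimeter -nth0 size_la.
  by have := nth_la 0 s_gt0; have := s_bound 0 s_gt0; rewrite s0; lia.
have s_eq : left_seq la = s.
  apply: (eq_from_nth (x0 := 0)); rewrite size_mkseq size_la // => i i_lt.
  rewrite nth_mkseq ?size_la // -nth0.
  have := nth_la i i_lt; have := nth_la 0 s_gt0; have := s_bound i i_lt; rewrite s0; lia.
have L_eq : left_set la = L by rewrite /left_set s_eq fset_sort_enum.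
by rewrite /right_set n_eq L_eq -R_fiotaD.
Qed.

End BipartitionOfFiota.

Section PartitionToBipartition.
Context {la : seq nat}.
Hypothesis la_part : is_partition la.

Lemma partition_nth_bounds {i : nat} : i < size la -> 0 < nth 0 la i <= head 0 la.
Proof.
move: la_part => /andP[la_sorted la_pos] i_lt.
rewrite (allP la_pos) ?mem_nth //= -nth0.
have geq_trans : transitive geq by move=> x y z /[swap]; apply: leq_trans.
have la_gt0 : 0 < size la := leq_ltn_trans (leq0n i) i_lt.
exact: (sorted_leq_nth geq_trans leqnn 0 la_sorted 0 i la_gt0 i_lt (leq0n i)).
Qed.

Lemma left_seq_sorted : sorted ltn (left_seq la).
Proof.
move: la_part => /andP[/(sortedP 0) la_sorted _].
apply/(sortedP 0) => i; rewrite size_mkseq => i_lt.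
rewrite !nth_mkseq //; last exact: ltnW.
by have := la_sorted i i_lt; have := partition_nth_bounds (ltnW i_lt); lia.
Qed.

Lemma sort_left_set : sort leq (enum_fset (left_set la)) = left_seq la.
Proof. exact/sort_enum_fset/left_seq_sorted. Qed.

Lemma mem_left_seq x : x \in left_seq la -> 0 < x < semiperimeter la.
Proof.
case/(nthP 0) => i; rewrite size_mkseq => i_lt <-; rewrite nth_mkseq //.
by have := partition_nth_bounds i_lt; rewrite /semiperimeter; lia.
Qed.

Lemma left_right_set_cover : left_set la `|` right_set la = fiota (semiperimeter la).
Proof.
apply/fsetP => x; rewrite in_fsetU in_fsetD.
case: (boolP (x \in left_set la)) => //= x_L; apply/esym.
by move: x_L; rewrite in_fset in_fiota => /mem_left_seq; lia.
Qed.

Lemma left_right_set_disjoint : left_set la `&` right_set la = fset0.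
Proof. by apply/fsetP => x; rewrite in_fsetI in_fsetD; case: (x \in left_set la). Qed.

Hypothesis la_ne : la != [::].

Lemma semiperimeter_in_right_set : semiperimeter la \in right_set la.
Proof.
have la_gt0 : 0 < size la by rewrite lt0n size_eq0.
rewrite in_fsetD in_fiota leqnn andbT in_fset; apply/andP; split.
  by apply/negP => /mem_left_seq; lia.
by rewrite /semiperimeter; lia.
Qed.

End PartitionToBipartition.

Lemma elementary_left_right_set la :
  is_partition la -> elementary (left_set la) (right_set la).
Proof.
move=> la_part; have [->|la_ne] := eqVneq la [::].
  rewrite left_set_nil right_set_nil; split; last by left.
  by split; [rewrite fsetI0 | left; rewrite fsetU0].
apply: (elementary_fiotaP (one_in_left_set la_ne)).2; exists (semiperimeter la).
split; [exact: left_right_set_cover | exact: left_right_set_disjoint |].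
exact: semiperimeter_in_right_set.
Qed.

Lemma lambdaLR_left_right_set la :
  is_partition la -> lambdaLR (left_set la) (right_set la) = la.
Proof.
move=> la_part; have [->|la_ne] := eqVneq la [::]; first by rewrite left_set_nil.
have [size_eq nth_eq] := lambdaLR_nth (left_right_set_cover la_part)
  left_right_set_disjoint (semiperimeter_in_right_set la_part la_ne).
rewrite sort_left_set // size_mkseq in size_eq nth_eq.
apply: (eq_from_nth (x0 := 0)) => // i i_lt; rewrite size_eq in i_lt.
have := nth_eq i i_lt; have := partition_nth_bounds la_part i_lt.
by rewrite nth_mkseq // /semiperimeter -nth0; lia.
Qed.

Lemma left_right_set_lambdaLR (L R : {fset nat}) :
  elementary L R -> (left_set (lambdaLR L R), right_set (lambdaLR L R)) = (L, R).
Proof.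
have [one_L /(elementary_fiotaP one_L)[n [LR_fiota LR0 n_R]]|one_nL] := boolP (1 \in L).
  exact: left_right_set_lambdaLR_fiota LR_fiota LR0 n_R one_L.
case=> _ [[-> ->]|[one_L _]]; last by rewrite one_L in one_nL.
by rewrite lambdaLR0 left_set_nil right_set_nil.
Qed.

Theorem proposition3p11 (la : seq nat) :
  is_partition la ->
  exists! LR : {fset nat} * {fset nat},
    elementary LR.1 LR.2 /\ lambdaLR LR.1 LR.2 = la.
Proof.
move=> la_part; exists (left_set la, right_set la); split.
  by split; [exact: elementary_left_right_set | exact: lambdaLR_left_right_set].
by case=> L R /= [eLR <-]; rewrite left_right_set_lambdaLR.
Qed.
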